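(* Let $m\ge3$, let $w_0^2(m)=\big(\sum_{l=1}^{m-1}\frac{m-l}{l^2}\big)^{-1}$, and for $k\ge0$ let $$w_{k+1}^2(m)=w_k^2(m)+\Big(\sum_{l=1}^{m-1}\frac{m-l}{l^2-w_k^2(m)}\Big)^{-1},$$ with $w_k(m)>0$. Then $w_0^2<w_1^2<\dots<w_k^2<1$ for all $k$, $\lim_{k\to\infty}w_k(m)=1$, and for each $k$, writing $w_k(m)=1-\varepsilon$ with $0<\varepsilon<1$, $$\frac{4\varepsilon}{7m-4}<w_{k+1}^2(m)-w_k^2(m)<\frac{1}{m-1}.$$ *)

From Stdlib Require Import Reals Lra Lia.
Open Scope R_scope.

Fixpoint sumS (m : nat) (x : R) (n : nat) : R :=
  match n with
  | O => 0
  | S n' => sumS m x n' + (INR m - INR n) / (INR n ^ 2 - x)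
  end.

Definition Ssum (m : nat) (x : R) : R := sumS m x (m - 1).

Fixpoint w2 (m : nat) (k : nat) : R :=
  match k with
  | O => / Ssum m 0
  | S k' => w2 m k' + / Ssum m (w2 m k')
  end.

Definition w (m k : nat) : R := sqrt (w2 m k).

(* For 0 <= x < 1 the sum S_m(x) is dominated by its first term: it lies between
   (m-1)/(1-x) and (m-1)/(1-x) + 3m/4, the tail being controlled by the telescoping
   sum of 1/(l^2-1).  Hence the increment 1/S_m(x) is at most (1-x)/(m-1), which keeps
   the iterates below 1, and, writing sqrt x = 1 - eps, at least 4 eps/(7m-4).  Since
   1 - x <= 2 eps, the gap 1 - w_k^2 then shrinks by the factor 1 - 2/(7m-4) at each
   step, so w_k^2 and hence w_k tend to 1. *)
From Stdlib Require Import Reals Lra Lia.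
Open Scope R_scope.

Lemma INR_ge_1 (n : nat) : (1 <= n)%nat -> 1 <= INR n.
Proof. intros Hn. apply (le_INR 1); exact Hn. Qed.

Lemma INR_ge_3 (n : nat) : (3 <= n)%nat -> 3 <= INR n.
Proof. intros Hn. replace 3 with (INR 3) by (simpl; lra). apply le_INR; exact Hn. Qed.

Section PartialSums.

Variables (m : nat) (x : R).
Hypothesis x_lt_1 : x < 1.

Lemma sumS_S (n : nat) :
  sumS m x (S n) = sumS m x n + (INR m - INR (S n)) / (INR (S n) ^ 2 - x).
Proof. reflexivity. Qed.

Lemma sumS_1 : sumS m x 1 = (INR m - 1) / (1 - x).
Proof. rewrite sumS_S. simpl. field. lra. Qed.

Lemma sumS_term_nonneg (l : nat) : (1 <= l <= m)%nat ->
  0 <= (INR m - INR l) / (INR l ^ 2 - x).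
Proof.
  intros [Hl1 Hlm].
  pose proof (INR_ge_1 l Hl1). pose proof (le_INR l m Hlm).
  apply Rmult_le_pos; [lra |]. left; apply Rinv_0_lt_compat. nra.
Qed.

Lemma sumS_ge_first_term (n : nat) : (1 <= n <= m)%nat ->
  (INR m - 1) / (1 - x) <= sumS m x n.
Proof.
  induction n as [| [| n] IH]; intros Hn; [lia | rewrite sumS_1; lra |].
  rewrite sumS_S. pose proof (sumS_term_nonneg (S (S n)) Hn).
  specialize (IH ltac:(lia)). lra.
Qed.

Hypothesis x_nonneg : 0 <= x.

(* The tail bound is Sum_{l=2}^{n} m/(l^2-1) = m (3/4 - 1/(2n) - 1/(2(n+1))). *)
Lemma sumS_le_first_term_tail (n : nat) : (1 <= n <= m)%nat ->
  sumS m x n <= (INR m - 1) / (1 - x) + INR m * (3/4 - / (2 * INR n) - / (2 * (INR n + 1))).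
Proof.
  induction n as [| [| n] IH]; intros Hn; [lia | |].
  - rewrite sumS_1. simpl. replace (3 / 4 - / (2 * 1) - / (2 * (1 + 1))) with 0 by field. lra.
  - rewrite sumS_S. specialize (IH ltac:(lia)).
    assert (Ham : INR (S (S n)) <= INR m) by (apply le_INR; lia).
    rewrite (S_INR (S n)) in *. set (a := INR (S n)) in *.
    assert (Ha : 1 <= a) by (apply INR_ge_1; lia).
    assert (Hterm : (INR m - (a + 1)) / ((a + 1) ^ 2 - x) <= INR m / (a * (a + 2))).
    { apply Rmult_le_compat; try lra.
      - left; apply Rinv_0_lt_compat; nra.
      - apply Rinv_le_contravar; nra. }
    assert (Htelescope : INR m / (a * (a + 2)) + INR m * (3 / 4 - / (2 * a) - / (2 * (a + 1)))
                       = INR m * (3 / 4 - / (2 * (a + 1)) - / (2 * (a + 1 + 1))))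
      by (field; lra).
    lra.
Qed.

End PartialSums.

Section OneStep.

Variables (m : nat) (x : R).
Hypothesis m_ge_3 : (3 <= m)%nat.
Hypothesis x_range : 0 < x < 1.

Let INR_m_ge_3 : 3 <= INR m := INR_ge_3 m m_ge_3.

Lemma Ssum_bounds :
  (INR m - 1) / (1 - x) <= Ssum m x <= (INR m - 1) / (1 - x) + 3 * INR m / 4.
Proof.
  unfold Ssum. split; [apply sumS_ge_first_term; lra || lia |].
  eapply Rle_trans; [apply sumS_le_first_term_tail; lra || lia |].
  assert (1 <= INR (m - 1)) by (apply INR_ge_1; lia).
  assert (0 < / (2 * INR (m - 1))) by (apply Rinv_0_lt_compat; lra).
  assert (0 < / (2 * (INR (m - 1) + 1))) by (apply Rinv_0_lt_compat; lra).
  nra.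
Qed.

Lemma Ssum_pos : 0 < Ssum m x.
Proof.
  pose proof Ssum_bounds as [H _].
  assert (0 < (INR m - 1) / (1 - x)) by (apply Rdiv_lt_0_compat; lra). lra.
Qed.

Lemma inv_Ssum_le : / Ssum m x <= (1 - x) / (INR m - 1).
Proof.
  pose proof Ssum_bounds as [H _].
  replace ((1 - x) / (INR m - 1)) with (/ ((INR m - 1) / (1 - x))) by (field; lra).
  apply Rinv_le_contravar; [apply Rdiv_lt_0_compat |]; lra.
Qed.

Lemma inv_Ssum_lt_gap : / Ssum m x < 1 - x.
Proof.
  pose proof inv_Ssum_le.
  assert (/ (INR m - 1) < 1) by (rewrite <- Rinv_1; apply Rinv_lt_contravar; lra).
  assert ((1 - x) * / (INR m - 1) < (1 - x) * 1) by (apply Rmult_lt_compat_l; lra).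
  unfold Rdiv in *. lra.
Qed.

Lemma inv_Ssum_lt : / Ssum m x < 1 / (INR m - 1).
Proof.
  pose proof inv_Ssum_le.
  assert ((1 - x) / (INR m - 1) < 1 / (INR m - 1))
    by (apply Rmult_lt_compat_r; [apply Rinv_0_lt_compat |]; lra).
  lra.
Qed.

Lemma inv_Ssum_gt : 4 * (1 - sqrt x) / (7 * INR m - 4) < / Ssum m x.
Proof.
  pose proof Ssum_bounds as [_ H].
  set (e := 1 - sqrt x).
  assert (Hsq : sqrt x * sqrt x = x) by (apply sqrt_sqrt; lra).
  pose proof (sqrt_pos x).
  assert (He : 0 < e <= 1 - x) by (unfold e; split; nra).
  assert (Hfirst : (INR m - 1) / (1 - x) <= (INR m - 1) / e)
    by (apply Rmult_le_compat_l; [| apply Rinv_le_contravar]; lra).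
  assert (Htail : 3 * INR m / 4 < 3 * INR m / (4 * e))
    by (apply Rmult_lt_compat_l; [| apply Rinv_lt_contravar]; nra).
  replace (4 * e / (7 * INR m - 4)) with (/ ((INR m - 1) / e + 3 * INR m / (4 * e)))
    by (field; lra).
  assert (0 < (INR m - 1) / e) by (apply Rdiv_lt_0_compat; lra).
  assert (0 < 3 * INR m / (4 * e)) by (apply Rdiv_lt_0_compat; lra).
  apply Rinv_lt_contravar; [apply Rmult_lt_0_compat; [apply Ssum_pos |] |]; lra.
Qed.

End OneStep.

Lemma Un_cv_of_dist_le_pow (u : nat -> R) (l q : R) : 0 <= q < 1 ->
  (forall n, Rabs (u n - l) <= q ^ n) -> Un_cv u l.
Proof.
  intros Hq Hu eps Heps.
  destruct (pow_lt_1_zero q ltac:(rewrite Rabs_right; lra) eps Heps) as [N HN].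
  exists N. intros n Hn. unfold R_dist.
  specialize (HN n Hn). rewrite Rabs_right in HN by (apply Rle_ge, pow_le; lra).
  specialize (Hu n). lra.
Qed.

Section Iterates.

Variable m : nat.
Hypothesis m_ge_3 : (3 <= m)%nat.

Let INR_m_ge_3 : 3 <= INR m := INR_ge_3 m m_ge_3.

Lemma w2_S (k : nat) : w2 m (S k) = w2 m k + / Ssum m (w2 m k).
Proof. reflexivity. Qed.

Lemma w2_range (k : nat) : 0 < w2 m k < 1.
Proof.
  induction k as [| k IH].
  - assert (H : (INR m - 1) / (1 - 0) <= Ssum m 0)
      by (apply sumS_ge_first_term; lra || lia).
    replace ((INR m - 1) / (1 - 0)) with (INR m - 1) in H by field.
    simpl. split; [apply Rinv_0_lt_compat; lra |].
    rewrite <- Rinv_1. apply Rinv_lt_contravar; lra.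
  - rewrite w2_S. pose proof (Rinv_0_lt_compat _ (Ssum_pos m _ m_ge_3 IH)).
    pose proof (inv_Ssum_lt_gap m _ m_ge_3 IH). lra.
Qed.

Lemma w_sqr (k : nat) : w m k * w m k = w2 m k.
Proof. apply sqrt_sqrt. pose proof (w2_range k). lra. Qed.

Lemma w_range (k : nat) : 0 < w m k < 1.
Proof.
  pose proof (w2_range k). pose proof (w_sqr k). pose proof (sqrt_pos (w2 m k)).
  unfold w in *. split; nra.
Qed.

Let rate_range : 0 < 2 / (7 * INR m - 4) <= 1.
Proof.
  split; [apply Rdiv_lt_0_compat; lra |].
  apply (Rmult_le_reg_r (7 * INR m - 4)); [lra | field_simplify; lra].
Qed.

(* From 1 - w^2 <= 2 (1 - w) and the lower bound on the increment. *)
Lemma w2_gap_contract (k : nat) :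
  1 - w2 m (S k) <= (1 - 2 / (7 * INR m - 4)) * (1 - w2 m k).
Proof.
  pose proof (inv_Ssum_gt m _ m_ge_3 (w2_range k)) as Hgt. fold (w m k) in Hgt.
  rewrite w2_S, <- w_sqr. rewrite <- w_sqr in Hgt.
  pose proof (w_range k).
  assert (Hgap : 1 - w m k * w m k <= 2 * (1 - w m k)) by nra.
  assert (Hc : 0 < / (7 * INR m - 4)) by (apply Rinv_0_lt_compat; lra).
  unfold Rdiv in *. nra.
Qed.

Lemma w2_gap_le_pow (k : nat) : 1 - w2 m k <= (1 - 2 / (7 * INR m - 4)) ^ k.
Proof.
  induction k as [| k IH].
  - pose proof (w2_range 0). rewrite pow_O. lra.
  - pose proof (w2_gap_contract k). pose proof rate_range.
    rewrite <- tech_pow_Rmult. nra.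
Qed.

Lemma w2_cv_1 : Un_cv (w2 m) 1.
Proof.
  apply (Un_cv_of_dist_le_pow _ _ (1 - 2 / (7 * INR m - 4))).
  - pose proof rate_range. lra.
  - intro k. pose proof (w2_range k). pose proof (w2_gap_le_pow k).
    rewrite Rabs_left by lra. lra.
Qed.

Lemma w_cv_1 : Un_cv (w m) 1.
Proof.
  rewrite <- sqrt_1. apply (continuity_seq sqrt (w2 m)); [apply continuity_pt_sqrt; lra |].
  exact w2_cv_1.
Qed.

End Iterates.

Theorem mainTheorem11 (m : nat) (hm : (3 <= m)%nat) :
  (forall k : nat, w2 m k < w2 m (S k)) /\
  (forall k : nat, w2 m k < 1) /\
  Un_cv (fun k => w m k) 1 /\
  (forall k : nat,
     let eps := 1 - w m k in
     0 < eps < 1 /\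
     4 * eps / (7 * INR m - 4) < w2 m (S k) - w2 m k /\
     w2 m (S k) - w2 m k < 1 / (INR m - 1)).
Proof.
  assert (Hincr : forall k, w2 m (S k) - w2 m k = / Ssum m (w2 m k))
    by (intro k; rewrite w2_S; ring).
  split; [| split; [| split]].
  - intro k. pose proof (Rinv_0_lt_compat _ (Ssum_pos m _ hm (w2_range m hm k))).
    specialize (Hincr k). lra.
  - intro k. apply (w2_range m hm k).
  - exact (w_cv_1 m hm).
  - intro k. cbv zeta. rewrite Hincr. pose proof (w_range m hm k).
    split; [lra | split].
    + exact (inv_Ssum_gt m _ hm (w2_range m hm k)).
    + exact (inv_Ssum_lt m _ hm (w2_range m hm k)).
Qed.
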